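(* Consider problem (PI): minimize $f(x)$ subject to $x\in X$, $g_i(x)\le 0$, $i=1,\dots,m$, where $\Gamma\subseteq\mathbb R^n$ is an open convex set and $X\subseteq\Gamma$ is convex. Let $\bar S$ be its solution set and $\bar x\in\bar S$. Assume $f:\Gamma\to\mathbb R$ is continuously differentiable and quasiconvex on $\Gamma$, $g_i$ for $i\in I(\bar x)$ are differentiable and quasiconvex on $\Gamma$, $g_i$ for $i\notin I(\bar x)$ are continuous at $\bar x$, $\nabla f(\bar x)\ne 0$, GMFCQ holds at $\bar x$, and $\lambda$ is a (fixed) KKT multiplier at $\bar x$. Define \[ \hat S_1'(\lambda):=\Big\{x\in X_1(\lambda)\ \Big|\ \nabla f(\bar x)^T(x-\bar x)=0,\ \nabla f(x)\ne0,\ \tfrac{\nabla f(x)}{\|\nabla f(x)\|}=\tfrac{\nabla f(\bar x)}{\|\nabla f(\bar x)\|}\Big\}, \] \[ \hat S_2'(\lambda):=\Big\{x\in X_1(\lambda)\ \Big|\ \nabla f(\bar x)^T(x-\bar x)\le0,\ \nabla f(x)\ne0,\ \tfrac{\nabla f(x)}{\|\nabla f(x)\|}=\tfrac{\nabla f(\bar x)}{\|\nabla f(\bar x)\|}\Big\}. \] Then $\bar S=\hat S_1'(\lambda)=\hat S_2'(\lambda)$.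
   Context: Quasiconvexity on $\Gamma$: $f(x+t(y-x))\le\max\{f(x),f(y)\}$ for all $x,y\in\Gamma$, $t\in[0,1]$. Feasible set $S:=\{x\in X\mid g_i(x)\le0,\ i=1,\dots,m\}$; $\bar S$ the set of global minimizers of $f$ on $S$. Active index set $I(x):=\{i\mid g_i(x)=0\}$. For a cone $C$, its negative polar is $C^*:=\{x\in\mathbb R^n\mid c^Tx\le 0\ \forall c\in C\}$; $T_X(x)$ is the tangent cone of $X$ at $x$ and $N_X(x):=(T_X(x))^*$ is the normal cone. GMFCQ holds at $\bar x$ iff there is $y\in (N_X(\bar x))^*$ with $\nabla g_i(\bar x)^Ty<0$ for all $i\in I(\bar x)$. A KKT multiplier at $\bar x$ is $\lambda\in\mathbb R^m$ with $\lambda_i\ge0$ for all $i$, $\lambda_ig_i(\bar x)=0$ for all $i$, and $\big[\nabla f(\bar x)+\sum_{i\in I(\bar x)}\lambda_i\nabla g_i(\bar x)\big]^T(x-\bar x)\ge0$ for all $x\in X$. Define $\tilde I(\bar x,\lambda):=\{i\mid g_i(\bar x)=0,\ \lambda_i>0\}$ and $X_1(\lambda):=\{x\in X\mid g_i(x)=0\ \forall i\in\tilde I(\bar x,\lambda),\ g_i(x)\le0\ \forall i\notin\tilde I(\bar x,\lambda)\}$. *)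

From mathcomp Require Import ssreflect ssrfun ssrbool eqtype ssrnat seq fintype bigop.
From Stdlib Require Import Reals.
Open Scope R_scope.

Definition vec (n : nat) := 'I_n -> R.

Definition vsub {n} (u v : vec n) : vec n := fun j => u j - v j.
Definition vadd {n} (u v : vec n) : vec n := fun j => u j + v j.
Definition vscale {n} (a : R) (u : vec n) : vec n := fun j => a * u j.
Definition vzero {n} : vec n := fun _ => 0.

Definition dot {n} (u v : vec n) : R := \big[Rplus/0]_(j < n) (u j * v j).
Definition norm {n} (u : vec n) : R := sqrt (dot u u).

Definition vopen_set {n} (G : vec n -> Prop) : Prop :=
  forall x, G x -> exists r, 0 < r /\ forall y, norm (vsub y x) < r -> G y.

Definition vconvex_set {n} (C : vec n -> Prop) : Prop :=
  forall x y t, C x -> C y -> 0 <= t <= 1 -> C (vadd x (vscale t (vsub y x))).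

Definition quasiconvex_on {n} (G : vec n -> Prop) (f : vec n -> R) : Prop :=
  forall x y t, G x -> G y -> 0 <= t <= 1 ->
    f (vadd x (vscale t (vsub y x))) <= Rmax (f x) (f y).

Definition is_gradient {n} (f : vec n -> R) (x v : vec n) : Prop :=
  forall eps, 0 < eps -> exists delta, 0 < delta /\
    forall y, norm (vsub y x) < delta ->
      Rabs (f y - f x - dot v (vsub y x)) <= eps * norm (vsub y x).

Definition continuous_at_sc {n} (f : vec n -> R) (x : vec n) : Prop :=
  forall eps, 0 < eps -> exists delta, 0 < delta /\
    forall y, norm (vsub y x) < delta -> Rabs (f y - f x) < eps.

Definition continuous_at_vec {n} (F : vec n -> vec n) (x : vec n) : Prop :=
  forall eps, 0 < eps -> exists delta, 0 < delta /\
    forall y, norm (vsub y x) < delta -> norm (vsub (F y) (F x)) < eps.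

Definition vcv {n} (d : nat -> vec n) (l : vec n) : Prop :=
  forall eps, 0 < eps -> exists N : nat, forall k : nat, (N <= k)%coq_nat ->
    norm (vsub (d k) l) < eps.

Definition tangent_cone {n} (X : vec n -> Prop) (x : vec n) : vec n -> Prop :=
  fun d => exists (t : nat -> R) (dk : nat -> vec n),
    (forall k, 0 < t k) /\ Un_cv t 0 /\ vcv dk d /\
    (forall k, X (vadd x (vscale (t k) (dk k)))).

Definition polar {n} (C : vec n -> Prop) : vec n -> Prop :=
  fun y => forall c, C c -> dot c y <= 0.

Definition normal_cone {n} (X : vec n -> Prop) (x : vec n) : vec n -> Prop :=
  polar (tangent_cone X x).

Definition feasible {n m} (X : vec n -> Prop) (g : 'I_m -> vec n -> R) : vec n -> Prop :=
  fun x => X x /\ forall i, g i x <= 0.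

Definition solution_set {n m} (f : vec n -> R) (X : vec n -> Prop)
  (g : 'I_m -> vec n -> R) : vec n -> Prop :=
  fun x => feasible X g x /\ forall y, feasible X g y -> f x <= f y.

Definition active {n m} (g : 'I_m -> vec n -> R) (x : vec n) (i : 'I_m) : Prop :=
  g i x = 0.

Definition GMFCQ {n m} (X : vec n -> Prop) (g : 'I_m -> vec n -> R)
  (gradg : 'I_m -> vec n -> vec n) (xb : vec n) : Prop :=
  exists y, polar (normal_cone X xb) y /\
    forall i, active g xb i -> dot (gradg i xb) y < 0.

Definition lagr_grad {n m} (gradf : vec n -> vec n) (g : 'I_m -> vec n -> R)
  (gradg : 'I_m -> vec n -> vec n) (lam : 'I_m -> R) (xb : vec n) : vec n :=
  fun j => gradf xb j +
    \big[Rplus/0]_(i < m)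
      (if Req_EM_T (g i xb) 0 then lam i * gradg i xb j else 0).

Definition KKT_multiplier {n m} (X : vec n -> Prop) (gradf : vec n -> vec n)
  (g : 'I_m -> vec n -> R) (gradg : 'I_m -> vec n -> vec n)
  (xb : vec n) (lam : 'I_m -> R) : Prop :=
  (forall i, 0 <= lam i) /\ (forall i, lam i * g i xb = 0) /\
  (forall x, X x -> dot (lagr_grad gradf g gradg lam xb) (vsub x xb) >= 0).

Definition Itilde {n m} (g : 'I_m -> vec n -> R) (lam : 'I_m -> R) (xb : vec n)
  (i : 'I_m) : Prop := g i xb = 0 /\ 0 < lam i.

Definition X1 {n m} (X : vec n -> Prop) (g : 'I_m -> vec n -> R)
  (lam : 'I_m -> R) (xb : vec n) : vec n -> Prop :=
  fun x => X x /\ (forall i, Itilde g lam xb i -> g i x = 0) /\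
    (forall i, ~ Itilde g lam xb i -> g i x <= 0).

Definition S1hat' {n m} (X : vec n -> Prop) (g : 'I_m -> vec n -> R)
  (gradf : vec n -> vec n) (lam : 'I_m -> R) (xb : vec n) : vec n -> Prop :=
  fun x => X1 X g lam xb x /\ dot (gradf xb) (vsub x xb) = 0 /\
    gradf x <> vzero /\
    vscale (/ norm (gradf x)) (gradf x) = vscale (/ norm (gradf xb)) (gradf xb).

Definition S2hat' {n m} (X : vec n -> Prop) (g : 'I_m -> vec n -> R)
  (gradf : vec n -> vec n) (lam : 'I_m -> R) (xb : vec n) : vec n -> Prop :=
  fun x => X1 X g lam xb x /\ dot (gradf xb) (vsub x xb) <= 0 /\
    gradf x <> vzero /\
    vscale (/ norm (gradf x)) (gradf x) = vscale (/ norm (gradf xb)) (gradf xb).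

(* On X_1(lam) the KKT inequality, together with the first-order condition of
   quasiconvexity for the constraints carrying positive multipliers, forces
   grad f(xb).(x - xb) = 0.  If moreover grad f(x) points in the direction of
   grad f(xb), then f(x) > f(xb) is impossible: a small step from xb along
   grad f(x) stays below f(x), yet is an ascent direction from x.
   Conversely, for a minimiser x the same KKT argument gives the orthogonality
   relations.  A quasiconvex function with nonzero gradient at y satisfies the
   strict condition f(x) < f(y) => grad f(y).(x - y) < 0; with GMFCQ this puts
   x in X_1(lam) and makes f constant on [xb, x].  Were grad f(x) = 0,
   quasiconvexity would make the whole segment critical, contradicting
   continuity of grad f at xb.  Finally every descent direction of f at xb is a
   non-ascent direction at x, so grad f(x) is a positive multiple of
   grad f(xb). *)

From HB Require Import structures.
From mathcomp Require Import ssreflect ssrfun ssrbool eqtype ssrnat seq fintype bigop.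
From Stdlib Require Import Reals Lra FunctionalExtensionality Classical.
Open Scope R_scope.

Lemma Rplus_associative : associative Rplus.
Proof. by move=> a b c; rewrite Rplus_assoc. Qed.
HB.instance Definition _ :=
  Monoid.isComLaw.Build R 0 Rplus Rplus_associative Rplus_comm Rplus_0_l.

Lemma sumR_add n (F G : 'I_n -> R) :
  \big[Rplus/0]_(j < n) (F j + G j) =
  \big[Rplus/0]_(j < n) F j + \big[Rplus/0]_(j < n) G j.
Proof. exact: big_split. Qed.

Lemma sumR_mull n c (F : 'I_n -> R) :
  \big[Rplus/0]_(j < n) (c * F j) = c * \big[Rplus/0]_(j < n) F j.
Proof.
by symmetry; apply: (big_morph (Rmult c)) => [a b|]; rewrite ?Rmult_plus_distr_l ?Rmult_0_r.
Qed.

Lemma sumR_le0 n (F : 'I_n -> R) :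
  (forall j, F j <= 0) -> \big[Rplus/0]_(j < n) F j <= 0.
Proof. by move=> F_le0; apply: (big_ind (fun x => x <= 0)) => // *; lra. Qed.

Lemma sumR_le0_eq0 n (F : 'I_n -> R) :
  (forall j, F j <= 0) -> 0 <= \big[Rplus/0]_(j < n) F j -> forall j, F j = 0.
Proof.
move=> F_le0 sum_ge0 j; rewrite (bigD1 j) //= in sum_ge0.
move: sum_ge0; set rest := (X in F j + X) => sum_ge0.
have rest_le0 : rest <= 0 by apply: (big_ind (fun x => x <= 0)) => // *; lra.
by have := F_le0 j; lra.
Qed.

Ltac vec_ext := apply: functional_extensionality => ?;
  rewrite /vadd /vsub /vscale /vzero; ring.

Lemma dotC {n} (u v : vec n) : dot u v = dot v u.
Proof. by apply: eq_bigr => j _; rewrite Rmult_comm. Qed.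

Lemma dotDr {n} (u v w : vec n) : dot u (vadd v w) = dot u v + dot u w.
Proof.
by rewrite /dot -sumR_add; apply: eq_bigr => j _; rewrite /vadd Rmult_plus_distr_l.
Qed.

Lemma dotZr {n} (u v : vec n) a : dot u (vscale a v) = a * dot u v.
Proof. by rewrite /dot -sumR_mull; apply: eq_bigr => j _; rewrite /vscale; ring. Qed.

Lemma dotBr {n} (u v w : vec n) : dot u (vsub v w) = dot u v - dot u w.
Proof.
have -> : vsub v w = vadd v (vscale (-1) w) by vec_ext.
by rewrite dotDr dotZr; ring.
Qed.

Lemma dotZl {n} (u v : vec n) a : dot (vscale a v) u = a * dot v u.
Proof. by rewrite dotC dotZr dotC. Qed.

Lemma dotBl {n} (u v w : vec n) : dot (vsub v w) u = dot v u - dot w u.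
Proof. by rewrite dotC dotBr !(dotC u). Qed.

Lemma dot0l {n} (u : vec n) : dot vzero u = 0.
Proof.
have -> : (vzero : vec n) = vscale 0 u by vec_ext.
by rewrite dotZl Rmult_0_l.
Qed.

Lemma dotvv_ge0 {n} (u : vec n) : 0 <= dot u u.
Proof. by apply: (big_ind (fun x => 0 <= x)) => // *; nra. Qed.

Lemma dotvv_eq0 {n} (u : vec n) : dot u u = 0 -> u = vzero.
Proof.
move=> uu0; apply: functional_extensionality => j.
have neg_sum : \big[Rplus/0]_(i < n) (- (u i * u i)) = -1 * dot u u.
  by rewrite /dot -sumR_mull; apply: eq_bigr => i _; ring.
have := @sumR_le0_eq0 n (fun i => - (u i * u i)) (fun i => ltac:(nra)).
by rewrite neg_sum uu0 Rmult_0_r => /(_ (Rle_refl 0) j); rewrite /vzero; nra.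
Qed.

Lemma dotvv_gt0 {n} (u : vec n) : u <> vzero -> 0 < dot u u.
Proof.
move=> u_neq0; case: (Rle_lt_or_eq_dec _ _ (dotvv_ge0 u)) => // /esym uu0.
by case: u_neq0; apply: dotvv_eq0.
Qed.

Lemma norm_gt0 {n} (u : vec n) : u <> vzero -> 0 < norm u.
Proof. by move=> u_neq0; apply: sqrt_lt_R0; apply: dotvv_gt0. Qed.

Lemma normZ {n} (u : vec n) a : norm (vscale a u) = Rabs a * norm u.
Proof.
rewrite /norm dotZl dotZr -Rmult_assoc sqrt_mult_alt; last by nra.
by rewrite sqrt_Rsqr_abs.
Qed.

Lemma norm_sub0l {n} (u : vec n) : norm (vsub vzero u) = norm u.
Proof.
have -> : vsub vzero u = vscale (-1) u by vec_ext.
by rewrite normZ Rabs_Ropp Rabs_R1 Rmult_1_l.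
Qed.

Lemma normalizeZ {n} (u : vec n) b : 0 < b -> u <> vzero ->
  vscale (/ norm (vscale b u)) (vscale b u) = vscale (/ norm u) u.
Proof.
move=> b_gt0 /norm_gt0 u_gt0; rewrite normZ Rabs_pos_eq; last lra.
apply: functional_extensionality => j; rewrite /vscale; field; lra.
Qed.

Lemma normalize_eqZ {n} (u v : vec n) : u <> vzero -> v <> vzero ->
  vscale (/ norm u) u = vscale (/ norm v) v -> u = vscale (norm u / norm v) v.
Proof.
move=> /norm_gt0 u_gt0 /norm_gt0 v_gt0 eq_uv; apply: functional_extensionality => j.
have := f_equal (fun w => norm u * w j) eq_uv.
rewrite /vscale -Rmult_assoc Rinv_r; last lra.
by rewrite Rmult_1_l => ->; field; lra.
Qed.

Lemma halfspace_polar_ray {n} (u v : vec n) : u <> vzero ->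
  (forall d, dot u d < 0 -> dot v d <= 0) -> exists b, 0 <= b /\ v = vscale b u.
Proof.
move=> /dotvv_gt0 uu_gt0 polar_v.
pose b := dot v u / dot u u; pose r := vsub v (vscale b u).
have ur0 : dot u r = 0 by rewrite /r dotBr dotZr (dotC u v) /b; field; lra.
have rr : dot r r = dot v r by rewrite {1}/r dotBl dotZl ur0; ring.
have vu_ge0 : 0 <= dot v u.
  by have := polar_v (vscale (-1) u); rewrite !dotZr; lra.
have rr0 : dot r r = 0.
  apply: Rle_antisym; last exact: dotvv_ge0.
  apply: Rnot_lt_le => rr_gt0.
  (* the component [r] of [v] orthogonal to [u] would give [d] with [u.d < 0 < v.d] *)
  have := polar_v (vadd (vscale (-1) u) (vscale ((dot v u + 1) / dot r r) r)).
  rewrite (dotDr u) (dotDr v) !dotZr ur0 -rr.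
  have -> : (dot v u + 1) / dot r r * dot r r = dot v u + 1 by field; lra.
  lra.
exists b; split; first by apply: Rmult_le_pos; [|left; apply: Rinv_0_lt_compat].
move/dotvv_eq0: rr0 => r0; apply: functional_extensionality => j.
by have := f_equal (fun w => w j) r0; rewrite /r /vsub /vscale /vzero; lra.
Qed.

Lemma lt_div_mulr (a t r : R) : 0 < a -> t < r / a -> t * a < r.
Proof.
move=> a_gt0 /(Rmult_lt_compat_r a _ _ a_gt0).
by rewrite /Rdiv Rmult_assoc Rinv_l ?Rmult_1_r //; lra.
Qed.

Lemma exists_pos_lt2 (a b : R) : 0 < a -> 0 < b -> exists t, 0 < t < a /\ t < b.
Proof.
move=> a_gt0 b_gt0; exists (Rmin a b / 2).
by have := Rmin_l a b; have := Rmin_r a b; have := Rmin_glb_lt _ _ _ a_gt0 b_gt0; lra.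
Qed.

Lemma vadd_scaleK {n} (x d : vec n) t : vsub (vadd x (vscale t d)) x = vscale t d.
Proof. by vec_ext. Qed.

Lemma norm_small_step {n} (d : vec n) r t :
  0 <= t < r / (norm d + 1) -> norm (vscale t d) < r.
Proof.
move=> [t_ge0 t_lt]; have nd_ge0 : 0 <= norm d by apply: sqrt_pos.
rewrite normZ Rabs_pos_eq //.
by have := lt_div_mulr (norm d + 1) t r ltac:(lra) t_lt; nra.
Qed.

Lemma open_ray {n} (G : vec n -> Prop) x d : vopen_set G -> G x ->
  exists T, 0 < T /\ forall t, 0 <= t < T -> G (vadd x (vscale t d)).
Proof.
move=> G_open /G_open [r [r_gt0 ball_r]].
have nd_ge0 : 0 <= norm d by apply: sqrt_pos.
exists (r / (norm d + 1)); split; first by apply: Rdiv_lt_0_compat; lra.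
by move=> t t_small; apply: ball_r; rewrite vadd_scaleK; apply: norm_small_step.
Qed.

Lemma gradient_bounds {n} (f : vec n -> R) x v d eps : is_gradient f x v -> 0 < eps ->
  exists T, 0 < T /\ forall t, 0 < t < T ->
    f x + t * (dot v d - eps) <= f (vadd x (vscale t d)) <= f x + t * (dot v d + eps).
Proof.
move=> grad_v eps_gt0; have nd_ge0 : 0 <= norm d by apply: sqrt_pos.
have [delta [delta_gt0 approx]] :=
  grad_v (eps / (norm d + 1)) ltac:(apply: Rdiv_lt_0_compat; lra).
exists (delta / (norm d + 1)); split; first by apply: Rdiv_lt_0_compat; lra.
move=> t [t_gt0 t_lt].
have small : norm (vsub (vadd x (vscale t d)) x) < delta.
  by rewrite vadd_scaleK; apply: norm_small_step; lra.
have := approx _ small; rewrite vadd_scaleK dotZr normZ (Rabs_pos_eq t); last lra.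
move=> err.
have err_le : eps / (norm d + 1) * (t * norm d) <= eps * t.
  have -> : eps / (norm d + 1) * (t * norm d) = eps * t * (norm d / (norm d + 1)).
    by field; lra.
  have : norm d / (norm d + 1) <= 1.
    by apply: Rlt_le; apply: (Rmult_lt_reg_r (norm d + 1)); [lra | field_simplify; lra].
  by move=> q_le1; rewrite -{2}(Rmult_1_r (eps * t)); apply: Rmult_le_compat_l => //; nra.
have := Rle_abs (f (vadd x (vscale t d)) - f x - t * dot v d).
have := Rle_abs (- (f (vadd x (vscale t d)) - f x - t * dot v d)).
rewrite Rabs_Ropp; lra.
Qed.

Lemma descent_step {n} (f : vec n -> R) x v d T0 :
  is_gradient f x v -> dot v d < 0 -> 0 < T0 ->
  exists t, 0 < t < T0 /\ f (vadd x (vscale t d)) < f x.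
Proof.
move=> grad_v vd_lt0 T0_gt0.
have [T [T_gt0 bounds]] := gradient_bounds f x v d (- dot v d / 2) grad_v ltac:(lra).
have [t [[t_gt0 t_lt] t_lt0]] := exists_pos_lt2 T T0 T_gt0 T0_gt0.
by exists t; split; [lra | have := bounds t ltac:(lra); nra].
Qed.

Lemma gradient_step {n} (G : vec n -> Prop) f x v d eta :
  vopen_set G -> G x -> is_gradient f x v -> 0 < eta ->
  exists t, 0 < t /\ G (vadd x (vscale t d)) /\ f (vadd x (vscale t d)) < f x + eta.
Proof.
move=> G_open Gx grad_v eta_gt0.
have [T1 [T1_gt0 bounds]] := gradient_bounds f x v d 1 grad_v Rlt_0_1.
have [T2 [T2_gt0 ray]] := open_ray G x d G_open Gx.
have c_gt0 : 0 < Rabs (dot v d) + 1 by have := Rabs_pos (dot v d); lra.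
have [t [[t_gt0 t_lt] t_small]] := exists_pos_lt2 (Rmin T1 T2) (eta / (Rabs (dot v d) + 1))
  (Rmin_glb_lt _ _ _ T1_gt0 T2_gt0) (Rdiv_lt_0_compat _ _ eta_gt0 c_gt0).
have := Rmin_l T1 T2; have := Rmin_r T1 T2 => T2_ge T1_ge.
exists t; split; [done | split; first by apply: ray; lra].
have := lt_div_mulr _ _ _ c_gt0 t_small; have := Rle_abs (dot v d).
by have := bounds t ltac:(lra); nra.
Qed.

Lemma quasiconvex_grad_le0 {n} (G : vec n -> Prop) f x y v :
  quasiconvex_on G f -> G x -> G y -> is_gradient f x v -> f y <= f x ->
  dot v (vsub y x) <= 0.
Proof.
move=> qcvx Gx Gy grad_v fy_le; apply: Rnot_lt_le => k_gt0.
have [T [T_gt0 bounds]] :=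
  gradient_bounds f x v (vsub y x) (dot v (vsub y x) / 2) grad_v ltac:(lra).
have [t [[t_gt0 t_lt] t_lt1]] := exists_pos_lt2 T 1 T_gt0 Rlt_0_1.
have := qcvx x y t Gx Gy ltac:(lra); rewrite Rmax_left //.
by have := bounds t ltac:(lra); nra.
Qed.

(* Step from [x] along [v]: the new point stays below [f y], so that
   [v.(x - y) + t |v|^2 <= 0]. *)
Lemma quasiconvex_grad_lt0 {n} (G : vec n -> Prop) f x y u v :
  vopen_set G -> quasiconvex_on G f -> G x -> G y ->
  is_gradient f x u -> is_gradient f y v -> v <> vzero -> f x < f y ->
  dot v (vsub x y) < 0.
Proof.
move=> G_open qcvx Gx Gy grad_u grad_v /dotvv_gt0 vv_gt0 fx_lt.
have [t [t_gt0 [Gz fz_lt]]] :=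
  gradient_step G f x u v (f y - f x) G_open Gx grad_u ltac:(lra).
have := quasiconvex_grad_le0 G f y _ v qcvx Gy Gz grad_v ltac:(lra).
by rewrite !dotBr dotDr dotZr; nra.
Qed.

(* If [u.d > 0], quasiconvexity between [a] and [b + t d] bounds
   [f (z + s t d)] by [f a + o(t)], whereas the gradient [u] at [z] forces an
   increase of order [s t u.d]. *)
Lemma quasiconvex_critical_segment {n} (G : vec n -> Prop) f a b s u :
  vopen_set G -> quasiconvex_on G f -> G a -> G b ->
  is_gradient f b vzero -> f b <= f a -> 0 < s <= 1 ->
  is_gradient f (vadd a (vscale s (vsub b a))) u ->
  f a <= f (vadd a (vscale s (vsub b a))) -> u = vzero.
Proof.
move=> G_open qcvx Ga Gb grad_b fb_le s_range.
set z := vadd a (vscale s (vsub b a)) => grad_z fz_ge.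
suff u_polar : forall d, dot u d <= 0.
  by apply: dotvv_eq0; apply: Rle_antisym; [apply: u_polar | apply: dotvv_ge0].
move=> d; apply: Rnot_lt_le => k_gt0.
have [T1 [T1_gt0 bounds_z]] := gradient_bounds f z u d (dot u d / 2) grad_z ltac:(lra).
have [T2 [T2_gt0 bounds_b]] :=
  gradient_bounds f b vzero d (s * dot u d / 4) grad_b ltac:(nra).
have [T3 [T3_gt0 ray]] := open_ray G b d G_open Gb.
have [t [[t_gt0 t_lt] t_lt1]] :=
  exists_pos_lt2 (Rmin T2 T3) T1 (Rmin_glb_lt _ _ _ T2_gt0 T3_gt0) T1_gt0.
have := Rmin_l T2 T3; have := Rmin_r T2 T3 => T3_ge T2_ge.
have on_segment :
    vadd a (vscale s (vsub (vadd b (vscale t d)) a)) = vadd z (vscale (s * t) d).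
  by rewrite /z; vec_ext.
have := qcvx a _ s Ga (ray t ltac:(lra)) ltac:(lra); rewrite on_segment.
have := bounds_b t ltac:(lra); rewrite dot0l => fbt_le.
have max_le : Rmax (f a) (f (vadd b (vscale t d))) <= f a + s * t * dot u d / 4.
  by apply: Rmax_lub; nra.
have stk_gt0 : 0 < s * t * dot u d by apply: Rmult_lt_0_compat; nra.
by have := bounds_z (s * t) ltac:(nra); lra.
Qed.

Definition kkt_term {n m} (g : 'I_m -> vec n -> R) (gradg : 'I_m -> vec n -> vec n)
  (lam : 'I_m -> R) (xb w : vec n) (i : 'I_m) : R :=
  if Req_EM_T (g i xb) 0 then lam i * dot (gradg i xb) w else 0.

Lemma lagr_grad_dot {n m} gradf (g : 'I_m -> vec n -> R) gradg lam xb w :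
  dot (lagr_grad gradf g gradg lam xb) w =
  dot (gradf xb) w + \big[Rplus/0]_(i < m) kkt_term g gradg lam xb w i.
Proof.
rewrite /dot /lagr_grad.
under eq_bigr => j _ do rewrite Rmult_plus_distr_r [X in _ + X]Rmult_comm -sumR_mull.
rewrite sumR_add (exchange_big_dep xpredT) //=; congr (_ + _).
apply: eq_bigr => i _; rewrite /kkt_term; case: (Req_EM_T (g i xb) 0) => gi /=.
  by rewrite -sumR_mull; apply: eq_bigr => j _; ring.
by rewrite big1 // => j _; rewrite Rmult_0_r.
Qed.

Lemma KKT_multiplier_orth {n m} X gradf (g : 'I_m -> vec n -> R) gradg xb lam x :
  KKT_multiplier X gradf g gradg xb lam -> X x ->
  dot (gradf xb) (vsub x xb) <= 0 ->
  (forall i, Itilde g lam xb i -> dot (gradg i xb) (vsub x xb) <= 0) ->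
  dot (gradf xb) (vsub x xb) = 0 /\
  (forall i, Itilde g lam xb i -> dot (gradg i xb) (vsub x xb) = 0).
Proof.
move=> [lam_ge0 [_ kkt_ineq]] Xx f_le0 g_le0.
have term_le0 i : kkt_term g gradg lam xb (vsub x xb) i <= 0.
  rewrite /kkt_term; case: (Req_EM_T (g i xb) 0) => [gi0 | gi_neq0] /=; last lra.
  case: (Rle_lt_or_eq_dec _ _ (lam_ge0 i)) => [lam_gt0 | <-]; last lra.
  by have := g_le0 i (conj gi0 lam_gt0); nra.
have := kkt_ineq x Xx; rewrite lagr_grad_dot => sum_ge.
have sum_le0 := sumR_le0 _ _ term_le0.
split=> [|i [gi0 lam_gt0]]; first lra.
have := sumR_le0_eq0 _ _ term_le0 ltac:(lra) i; rewrite /kkt_term.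
by case: (Req_EM_T (g i xb) 0) => // _ /= /Rmult_integral []; lra.
Qed.

Lemma X1_feasible {n m} X (g : 'I_m -> vec n -> R) lam xb x :
  X1 X g lam xb x -> feasible X g x.
Proof.
move=> [Xx [tight slack]]; split=> // i.
by case: (classic (Itilde g lam xb i)) => [/tight -> | /slack]; [apply: Rle_refl |].
Qed.

Lemma GMFCQ_active_grad_neq0 {n m} X (g : 'I_m -> vec n -> R) gradg xb i :
  GMFCQ X g gradg xb -> active g xb i -> gradg i xb <> vzero.
Proof. by move=> [y [_ descent]] /descent + grad0; rewrite grad0 dot0l; lra. Qed.

Section QuasiconvexProgram.

Variables (n m : nat) (Gamma X : vec n -> Prop) (f : vec n -> R)
  (gradf : vec n -> vec n) (g : 'I_m -> vec n -> R)
  (gradg : 'I_m -> vec n -> vec n) (xb : vec n) (lam : 'I_m -> R).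

Hypotheses (Gamma_open : vopen_set Gamma) (Gamma_convex : vconvex_set Gamma)
  (X_sub_Gamma : forall x, X x -> Gamma x) (xb_sol : solution_set f X g xb)
  (f_grad : forall x, Gamma x -> is_gradient f x (gradf x))
  (gradf_cont : forall x, Gamma x -> continuous_at_vec gradf x)
  (f_qcvx : quasiconvex_on Gamma f)
  (g_act : forall i, active g xb i ->
     (forall x, Gamma x -> is_gradient (g i) x (gradg i x)) /\
     quasiconvex_on Gamma (g i))
  (gradf_xb_neq0 : gradf xb <> vzero)
  (gmfcq : GMFCQ X g gradg xb)
  (kkt : KKT_multiplier X gradf g gradg xb lam).

Let Gamma_xb : Gamma xb.
Proof. by apply: X_sub_Gamma; case: xb_sol => [[]]. Qed.

Lemma feasible_KKT_orth x : feasible X g x ->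
  dot (gradf xb) (vsub x xb) <= 0 ->
  dot (gradf xb) (vsub x xb) = 0 /\
  (forall i, Itilde g lam xb i -> dot (gradg i xb) (vsub x xb) = 0).
Proof.
move=> [Xx g_le0] f_le0.
apply: (KKT_multiplier_orth _ _ _ _ _ _ _ kkt Xx f_le0) => i [gi0 _].
have [g_grad g_qcvx] := g_act i gi0.
apply: (quasiconvex_grad_le0 Gamma (g i)) => //;
  [exact: X_sub_Gamma | exact: g_grad | by rewrite gi0].
Qed.

Lemma S1hat'_solution x : S1hat' X g gradf lam xb x -> solution_set f X g x.
Proof.
move=> [/X1_feasible feas [orth [gradf_x_neq0 same_dir]]].
have Gx : Gamma x by apply: X_sub_Gamma; case: feas.
split=> // y feas_y; apply: Rle_trans (proj2 xb_sol y feas_y).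
apply: Rnot_lt_le => fxb_lt.
have := quasiconvex_grad_lt0 Gamma f xb x (gradf xb) (gradf x) Gamma_open f_qcvx
  Gamma_xb Gx (f_grad xb Gamma_xb) (f_grad x Gx) gradf_x_neq0 fxb_lt.
rewrite (normalize_eqZ _ _ gradf_x_neq0 gradf_xb_neq0 same_dir) dotZl.
have -> : dot (gradf xb) (vsub xb x) = 0 by move: orth; rewrite !dotBr; lra.
by rewrite Rmult_0_r; lra.
Qed.

Lemma S2hat'_S1hat' x : S2hat' X g gradf lam xb x -> S1hat' X g gradf lam xb x.
Proof.
move=> [X1x [f_le0 normal]]; split=> //; split=> //.
exact: (feasible_KKT_orth x (X1_feasible _ _ _ _ _ X1x) f_le0).1.
Qed.

Section Minimizer.

Variable x : vec n.
Hypothesis x_sol : solution_set f X g x.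

Let Gamma_x : Gamma x.
Proof. by apply: X_sub_Gamma; case: x_sol => [[]]. Qed.

Lemma solution_value : f x = f xb.
Proof.
by have := proj2 x_sol xb (proj1 xb_sol); have := proj2 xb_sol x (proj1 x_sol); lra.
Qed.

Lemma solution_KKT_orth :
  dot (gradf xb) (vsub x xb) = 0 /\
  (forall i, Itilde g lam xb i -> dot (gradg i xb) (vsub x xb) = 0).
Proof.
apply: feasible_KKT_orth; first exact: (proj1 x_sol).
apply: (quasiconvex_grad_le0 Gamma f) => //; first exact: f_grad.
by rewrite solution_value; apply: Rle_refl.
Qed.

(* GMFCQ enters only here: it makes the active constraint gradients nonzero. *)
Lemma solution_X1 : X1 X g lam xb x.
Proof.
have [[Xx g_le0] _] := x_sol.
split=> //; split=> [i [gi0 lam_gt0] | i _]; last exact: g_le0.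
apply: Rle_antisym; first exact: g_le0.
apply: Rnot_lt_le => gi_lt0; have [g_grad g_qcvx] := g_act i gi0.
have := quasiconvex_grad_lt0 Gamma (g i) x xb (gradg i x) (gradg i xb) Gamma_open g_qcvx
  Gamma_x Gamma_xb (g_grad x Gamma_x) (g_grad xb Gamma_xb)
  (GMFCQ_active_grad_neq0 _ _ _ _ _ gmfcq gi0) ltac:(rewrite gi0; lra).
by rewrite (solution_KKT_orth.2 i (conj gi0 lam_gt0)); lra.
Qed.

Lemma solution_segment_value s : 0 <= s <= 1 ->
  f (vadd xb (vscale s (vsub x xb))) = f xb.
Proof.
move=> s_range; have Gz := Gamma_convex xb x s Gamma_xb Gamma_x s_range.
apply: Rle_antisym.
  by have := f_qcvx xb x s Gamma_xb Gamma_x s_range; rewrite solution_value Rmax_left; lra.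
apply: Rnot_lt_le => fz_lt.
have := quasiconvex_grad_lt0 Gamma f _ xb _ (gradf xb) Gamma_open f_qcvx Gz Gamma_xb
  (f_grad _ Gz) (f_grad xb Gamma_xb) gradf_xb_neq0 fz_lt.
by rewrite vadd_scaleK dotZr solution_KKT_orth.1; lra.
Qed.

Lemma solution_grad_neq0 : gradf x <> vzero.
Proof.
move=> gradf_x0.
have critical s : 0 < s <= 1 -> gradf (vadd xb (vscale s (vsub x xb))) = vzero.
  move=> s_range; have Gz := Gamma_convex xb x s Gamma_xb Gamma_x ltac:(lra).
  apply: (quasiconvex_critical_segment Gamma f xb x s) => //.
  - by rewrite -gradf_x0; apply: f_grad.
  - by rewrite solution_value; apply: Rle_refl.
  - exact: f_grad.
  - by rewrite solution_segment_value; [apply: Rle_refl | lra].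
have [de [de_gt0 near_xb]] := gradf_cont xb Gamma_xb _ (norm_gt0 _ gradf_xb_neq0).
have nw_ge0 : 0 <= norm (vsub x xb) by apply: sqrt_pos.
have [s [s_range s_small]] := exists_pos_lt2 1 (de / (norm (vsub x xb) + 1)) Rlt_0_1
  ltac:(apply: Rdiv_lt_0_compat; lra).
have := near_xb (vadd xb (vscale s (vsub x xb))).
rewrite vadd_scaleK critical ?norm_sub0l; last lra.
by move=> /(_ (norm_small_step (vsub x xb) de s ltac:(lra))); lra.
Qed.

Lemma solution_grad_orth : dot (gradf x) (vsub xb x) = 0.
Proof.
apply: Rle_antisym.
  apply: (quasiconvex_grad_le0 Gamma f) => //; first exact: f_grad.
  by rewrite solution_value; apply: Rle_refl.
apply: Rnot_lt_le => descent.
have [t [t_range ft_lt]] := descent_step f x _ _ 1 (f_grad x Gamma_x) descent Rlt_0_1.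
have on_segment : vadd x (vscale t (vsub xb x)) = vadd xb (vscale (1 - t) (vsub x xb)).
  by vec_ext.
by move: ft_lt; rewrite on_segment solution_segment_value ?solution_value; lra.
Qed.

(* Every descent direction of [f] at [xb] is a non-ascent direction at [x]. *)
Lemma solution_grad_ray : exists b, 0 < b /\ gradf x = vscale b (gradf xb).
Proof.
have [b [b_ge0 grad_x]] : exists b, 0 <= b /\ gradf x = vscale b (gradf xb).
  apply: halfspace_polar_ray => // d descent.
  have [T [T_gt0 ray]] := open_ray Gamma xb d Gamma_open Gamma_xb.
  have [t [t_range ft_lt]] := descent_step f xb _ _ T (f_grad xb Gamma_xb) descent T_gt0.
  have := quasiconvex_grad_le0 Gamma f x _ _ f_qcvx Gamma_x (ray t ltac:(lra))
    (f_grad x Gamma_x) ltac:(rewrite solution_value; lra).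
  have := solution_grad_orth; rewrite !dotBr dotDr dotZr; nra.
exists b; split=> //; case: (Rle_lt_or_eq_dec _ _ b_ge0) => // b0.
by case: solution_grad_neq0; rewrite grad_x -b0; vec_ext.
Qed.

Lemma solution_S1hat' : S1hat' X g gradf lam xb x.
Proof.
split; first exact: solution_X1.
split; first exact: solution_KKT_orth.1.
split; first exact: solution_grad_neq0.
have [b [b_gt0 ->]] := solution_grad_ray.
exact: normalizeZ.
Qed.

End Minimizer.

End QuasiconvexProgram.

Theorem theorem4 (n m : nat) (Gamma X : vec n -> Prop)
  (f : vec n -> R) (gradf : vec n -> vec n)
  (g : 'I_m -> vec n -> R) (gradg : 'I_m -> vec n -> vec n)
  (xb : vec n) (lam : 'I_m -> R) :
  vopen_set Gamma -> vconvex_set Gamma ->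
  vconvex_set X -> (forall x, X x -> Gamma x) ->
  solution_set f X g xb ->
  (forall x, Gamma x -> is_gradient f x (gradf x)) ->
  (forall x, Gamma x -> continuous_at_vec gradf x) ->
  quasiconvex_on Gamma f ->
  (forall i, active g xb i ->
     (forall x, Gamma x -> is_gradient (g i) x (gradg i x)) /\
     quasiconvex_on Gamma (g i)) ->
  (forall i, ~ active g xb i -> continuous_at_sc (g i) xb) ->
  gradf xb <> vzero ->
  GMFCQ X g gradg xb ->
  KKT_multiplier X gradf g gradg xb lam ->
  (forall x, solution_set f X g x <-> S1hat' X g gradf lam xb x) /\
  (forall x, S1hat' X g gradf lam xb x <-> S2hat' X g gradf lam xb x).
Proof.
move=> Gamma_open Gamma_convex _ X_sub_Gamma xb_sol f_grad gradf_cont f_qcvx g_act _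
  gradf_xb_neq0 gmfcq kkt.
split=> x; split.
- by apply: (solution_S1hat' _ _ Gamma X f gradf g gradg).
- by apply: (S1hat'_solution _ _ Gamma X f gradf g).
- by move=> [X1x [orth normal]]; split=> //; split=> //; rewrite orth; apply: Rle_refl.
- by apply: (S2hat'_S1hat' _ _ Gamma X f gradf g gradg).
Qed.
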